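(* Let $(G,H,\mathcal{L})$ be a cut-and-project scheme and let $a\in G$. Then there exist a cut-and-project scheme $(G,H',\mathcal{L}')$ and some $b\in H'$ such that: (a) $H$ is (identified with) an open and closed subgroup of $H'$; (b) $(a,b)\in\mathcal{L}'$; (c) $\mathcal{L}'\cap(G\times H)=\mathcal{L}$; (d) for each $W\subseteq H$ we have $\Lambda_W=\pi^G(\mathcal{L}'\cap(G\times W))$ and $a+\Lambda_W=\pi^G(\mathcal{L}'\cap(G\times(b+W)))$; (e) for each $W\subseteq H$, both $W\subseteq H'$ and $b+W\subseteq H'$ have each of the properties precompactness, non-empty interior, topological regularity and measure-theoretic regularity (with respect to $H'$) which $W$ has as a subset of $H$; (f) if $H$ is metrisable, then $H'$ is metrisable.
   Context: A cut-and-project scheme $(G,H,\mathcal{L})$ consists of locally compact abelian groups $G,H$ and a discrete cocompact subgroup (lattice) $\mathcal{L}\subseteq G\times H$ such that the coordinate projection $\pi^G$ restricted to $\mathcal{L}$ is injective and $\pi^H(\mathcal{L})$ is dense in $H$. For $W\subseteq H$ the projection set is $\Lambda_W=\pi^G(\mathcal{L}\cap(G\times W))$. For a set $W\subseteq H$: precompact means $\overline{W}$ is compact; topologically regular means $\overline{W}=\overline{W^\circ}$; measure-theoretically regular means the boundary $\partial W=\overline W\setminus W^\circ$ has Haar measure zero. *)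

From HB Require Import structures.
From mathcomp Require Import all_boot all_order all_algebra.
From mathcomp Require Import all_classical all_reals all_analysis.
From mathcomp Require Import Rstruct Rstruct_topology.
Set Implicit Arguments. Unset Strict Implicit. Unset Printing Implicit Defensive.
Import Order.TTheory GRing.Theory Num.Theory.
Local Open Scope classical_set_scope.
Local Open Scope ring_scope.

Notation RR := Rdefinitions.R.

Definition locally_compact_space (T : topologicalType) : Prop :=
  forall x : T, exists K : set T, nbhs x K /\ compact K.

Definition LCA (T : topologicalZmodType) : Prop :=
  hausdorff_space T /\ locally_compact_space T.

Definition is_subgroup (T : zmodType) (A : set T) : Prop :=
  A 0 /\ forall x y, A x -> A y -> A (x - y).

Definition pair_add (G H : zmodType) (p q : G * H) : G * H :=
  (p.1 + q.1, p.2 + q.2).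
Definition pair_zero (G H : zmodType) : G * H := (0, 0).
Definition pair_sub (G H : zmodType) (p q : G * H) : G * H :=
  (p.1 - q.1, p.2 - q.2).

Definition is_pair_subgroup (G H : zmodType) (L : set (G * H)) : Prop :=
  L (pair_zero G H) /\ forall p q, L p -> L q -> L (pair_sub p q).

Definition discrete_subset (T : topologicalType) (A : set T) : Prop :=
  forall x, A x -> exists U : set T, nbhs x U /\ U `&` A = [set x].

(* cocompact: the quotient (G x H)/L is compact, i.e. there is a compact
   set K of G x H whose L-translates cover G x H *)
Definition cocompact_pair (G H : topologicalZmodType) (L : set (G * H)) : Prop :=
  exists K : set (G * H), compact K /\
    forall p : G * H, exists k l, K k /\ L l /\ p = pair_add k l.

Definition lattice (G H : topologicalZmodType) (L : set (G * H)) : Prop :=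
  [/\ is_pair_subgroup L, discrete_subset L & cocompact_pair L].

Definition cut_and_project (G H : topologicalZmodType) (L : set (G * H)) : Prop :=
  [/\ LCA G, LCA H, lattice L,
      {in L &, injective (fun p : G * H => p.1)}
    & dense [set p.2 | p in L]].

Definition proj_set (G H : Type) (L : set (G * H)) (W : set H) : set G :=
  [set p.1 | p in L `&` [set q | W q.2]].

Definition precompact_set (T : topologicalType) (W : set T) : Prop :=
  compact (closure W).

Definition nonempty_interior (T : topologicalType) (W : set T) : Prop :=
  interior W !=set0.

Definition topologically_regular (T : topologicalType) (W : set T) : Prop :=
  closure W = closure (interior W).

Definition boundary (T : topologicalType) (W : set T) : set T :=
  closure W `\` interior W.

(* Haar measure: a nonzero translation-invariant Radon measure on the Borel
   sets (sigma-algebra generated by the open sets). *)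
Definition borel (T : topologicalType) : set (set T) := <<s (@open T) >>.

Definition is_haar_measure (T : topologicalZmodType)
    (mu : set T -> \bar RR) : Prop :=
  mu set0 = 0%E /\
     (forall A, borel A -> (0 <= mu A)%E) /\
      (forall F : nat -> set T, (forall n, borel (F n)) -> trivIset setT F ->
         (fun n => \sum_(k < n) mu (F k))%E @ \oo --> mu (\bigcup_n F n)) /\
      (forall (x : T) A, borel A -> mu [set x + a | a in A] = mu A) /\
      (forall K, compact K -> (mu K < +oo)%E) /\
      (forall A, borel A ->
         mu A = ereal_inf [set mu U | U in [set U | open U /\ A `<=` U]]) /\
      (forall U, open U ->
         mu U = ereal_sup [set mu K | K in [set K | compact K /\ K `<=` U]]) /\
     (exists A, borel A /\ mu A != 0%E).

(* Haar null set; by uniqueness of Haar measure up to a positive scalar,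
   this is equivalent to being null for one (any) Haar measure. *)
Definition haar_null (T : topologicalZmodType) (A : set T) : Prop :=
  forall mu : set T -> \bar RR, is_haar_measure mu -> mu A = 0%E.

Definition measure_regular (T : topologicalZmodType) (W : set T) : Prop :=
  haar_null (boundary W).

Definition metrisable (T : topologicalType) : Prop :=
  exists d : T -> T -> RR,
    [/\ (forall x y, 0 <= d x y),
        (forall x y, d x y = 0 <-> x = y),
        (forall x y, d x y = d y x),
        (forall x y z, d x z <= d x y + d y z)
      & forall A : set T, open A <->
          (forall x, A x -> exists2 e : RR, 0 < e & [set y | d x y < e] `<=` A)].

Definition open_closed_subgroup_embedding (H H' : topologicalZmodType)
    (j : H -> H') : Prop :=
  [/\ injective j,
      (forall x y, j (x + y) = j x + j y),
      continuous j,
      (forall U : set H, open U -> open (j @` U))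
    & open (range j) /\ closed (range j)].

From HB Require Import structures.
From mathcomp Require Import all_boot all_order all_algebra.
From mathcomp Require Import all_classical all_reals all_analysis.
From mathcomp Require Import ring lra Rstruct Rstruct_topology.
Set Implicit Arguments. Unset Strict Implicit. Unset Printing Implicit Defensive.
Import Order.TTheory GRing.Theory Num.Theory.
Local Open Scope classical_set_scope.
Local Open Scope ring_scope.

(* The integers k such that a *~ k is the G-component of a point of L form a
   subgroup N Z of Z; fix c with (a *~ N, c) in L.  Put
   H' := (H x Z) / <(c, -N)>, topologised so that the classes of the (h, 0)
   form an open copy of H, let L' be the set of (g, [h, i]) with
   (g - a *~ i, h) in L, and b := [0, 1].  Since (a *~ N, c) is in L, L' is
   well defined, and it is the minimality of N that makes the projection to G
   injective on L'.  Everything else transfers along the embedding of H and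
   the translation by b, which are homeomorphisms onto clopen sets; for Haar
   measures one uses that H has countable index in H', so that a Haar measure
   of H' restricts to a Haar measure of H. *)

Section Subgroup.
Variables (T : zmodType) (A : set T).
Hypothesis sA : is_subgroup A.

Lemma subgroup0 : A 0. Proof. by case: sA. Qed.

Lemma subgroupB x y : A x -> A y -> A (x - y). Proof. by case: sA => _; apply. Qed.

Lemma subgroupN x : A x -> A (- x).
Proof. by move=> Ax; rewrite -sub0r; exact: subgroupB subgroup0 Ax. Qed.

Lemma subgroupD x y : A x -> A y -> A (x + y).
Proof. by move=> Ax /subgroupN Ay; rewrite -[y]opprK; exact: subgroupB. Qed.

Lemma subgroupMz x k : A x -> A (x *~ k).
Proof.
move=> Ax; have Mn n : A (x *+ n).
  by elim: n => [|n IHn]; [rewrite mulr0n; exact: subgroup0 | rewrite mulrS; exact: subgroupD].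
by case: k => n; [exact: Mn | rewrite NegzE mulrNz; exact/subgroupN/Mn].
Qed.

End Subgroup.

Lemma pair_subgroupE (G H : zmodType) (L : set (G * H)) :
  is_pair_subgroup L = is_subgroup L.
Proof. by []. Qed.

Lemma pair_subgroupMz (G H : zmodType) (L : set (G * H)) g h k :
  is_subgroup L -> L (g, h) -> L (g *~ k, h *~ k).
Proof. by move=> sL /(subgroupMz sL k); rewrite [_ *~ k]surjective_pairing !raddfMz. Qed.

Lemma int_subgroup_dvdz (S : set int) :
  is_subgroup S -> exists N : int, forall k, S k <-> (N %| k)%Z.
Proof.
move=> sS.
have [[k0 [Sk0 k0_neq0]]|S0] := pselect (exists k, S k /\ k != 0); last first.
  exists 0 => k; rewrite dvd0z; split => [Sk|/eqP ->]; last exact: subgroup0.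
  by have [//|k0] := eqVneq k 0; exfalso; apply: S0; exists k.
have [n [n0 Sn]] : exists n : nat, (0 < n)%N /\ S n.
  exists `|k0|%N; rewrite absz_gt0 k0_neq0; split => //.
  by case: (ger0P k0) => [/gez0_abs|/ltz0_abs] ->; [|exact: subgroupN].
have exP : exists n, (0 < n)%N && `[< S n >] by exists n; rewrite n0; exact/asboolP.
case: (ex_minnP exP) => m /andP[m0 /asboolP Sm] m_min.
exists m => k; split => [Sk|/dvdzP[q ->]]; last first.
  by rewrite mulrC -mulrzz; apply: subgroupMz.
have Sr : S (k %% m)%Z.
  by rewrite /modz mulrC -mulrzz; apply: subgroupB => //; apply: subgroupMz.
apply/dvdz_mod0P; have [//|r0] := eqVneq (k %% m)%Z 0.
have r_gt0 : (0 < `|(k %% m)%Z|)%N by rewrite absz_gt0.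
have /m_min : (0 < `|(k %% m)%Z|)%N && `[< S `|(k %% m)%Z|%N >].
  by rewrite r_gt0; apply/asboolP; rewrite gez0_abs // modz_ge0 // -lt0n.
by rewrite leqNgt -ltz_nat gez0_abs ?modz_ge0 ?ltz_pmod ?ltz_nat -?lt0n.
Qed.

Lemma pair_subgroup_multiples (G H : zmodType) (L : set (G * H)) (a : G) :
  is_pair_subgroup L ->
  exists (N : int) (c : H), L (a *~ N, c) /\ forall k h, L (a *~ k, h) -> (N %| k)%Z.
Proof.
rewrite pair_subgroupE => sL.
have sS : is_subgroup [set k : int | exists h, L (a *~ k, h)].
  split => [|k k' [h Lkh] [h' Lkh']]; first by exists 0; rewrite mulr0z; exact: (subgroup0 sL).
  by exists (h - h'); rewrite mulrzBr; exact: (subgroupB sL Lkh Lkh').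
have [N SN] := int_subgroup_dvdz sS.
have [c LNc] : exists c, L (a *~ N, c) by apply/SN.
by exists N, c; split => // k h Lkh; apply/SN; exists h.
Qed.

Section Translation.
Variable M : topologicalZmodType.

Lemma addr_continuous (b : M) : continuous (fun y => y + b).
Proof.
move=> y; apply: (continuous_comp (f := fun y => (y, b)) _ (@add_continuous M (y, b))).
by apply: cvg_pair; [exact: cvg_id | exact: cvg_cst].
Qed.

Lemma addl_continuous (b : M) : continuous (fun y => b + y).
Proof.
have -> : (fun y => b + y) = (fun y => y + b) by apply/funext => y; exact: addrC.
exact: addr_continuous.
Qed.

End Translation.

Section Borel.
Variable T : topologicalType.

Lemma borel_open (A : set T) : open A -> borel A.
Proof. exact: sub_sigma_algebra. Qed.

Lemma borelC (A : set T) : borel A -> borel (~` A).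
Proof. by rewrite -setTD; exact: sigma_algebraCD. Qed.

Lemma borel_bigcup (F : (set T)^nat) : (forall n, borel (F n)) -> borel (\bigcup_n F n).
Proof. exact: sigma_algebra_bigcup. Qed.

Lemma borelD (A B : set T) : borel A -> borel B -> borel (A `\` B).
Proof.
move=> bA bB; have -> : A `\` B = ~` (~` A `|` B) by rewrite setCU setCK.
apply: borelC; rewrite -bigcup2E; apply: borel_bigcup => -[|[|n]] //=.
  exact: borelC.
exact: borel_open open0.
Qed.

Lemma borel_boundary (A : set T) : borel (boundary A).
Proof.
apply: borelD; last by apply: borel_open; exact: open_interior.
rewrite -[closure A]setCK; apply: borelC; apply: borel_open.
by rewrite openC; exact: closed_closure.
Qed.

End Borel.

Lemma inj_image_setD (T U : Type) (f : T -> U) (A B : set T) : injective f ->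
  f @` (A `\` B) = f @` A `\` f @` B.
Proof.
move=> f_inj; apply/seteqP; split => [_ [t [At nBt] <-]|_ [[t At <-] nBft]].
  by split; [exists t | move=> [t' Bt' /f_inj ett']; apply: nBt; rewrite -ett'].
by exists t => //; split => // Bt; apply: nBft; exists t.
Qed.

Definition clopen_embedding (S T : topologicalType) (j : S -> T) : Prop :=
  [/\ injective j, continuous j, (forall U : set S, open U -> open (j @` U))
    & closed (range j)].

Section ClopenEmbedding.
Variables (S T : topologicalType) (j : S -> T).
Hypothesis jE : clopen_embedding j.

Let j_inj : injective j. Proof. by case: jE. Qed.

Let j_cont : continuous j. Proof. by case: jE. Qed.

Lemma nbhs_embedding (x : S) (B : set S) : nbhs x B -> nbhs (j x) (j @` B).
Proof.
case: jE => _ _ j_open _; rewrite !nbhsE => -[U [oU Ux] UB].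
by exists (j @` U); [split; [exact: j_open | exists x] | exact: image_subset].
Qed.

Lemma closure_embedding (A : set S) : closure (j @` A) = j @` closure A.
Proof.
apply/seteqP; split => [y clAy|_ [x clAx <-]]; last first.
  move=> B nB; have [a [Aa Ba]] := clAx _ (j_cont nB).
  by exists (j a); split => //; exists a.
have [x _ exy] : range j y.
  case: jE => _ _ _ /closure_id ->.
  by apply: closureS clAy; exact/image_subset/subsetT.
subst y; exists x => // B nB.
have [_ [[a Aa <-] [b Bb /j_inj eba]]] := clAy _ (nbhs_embedding nB).
by exists a; split => //; rewrite -eba.
Qed.

Lemma interior_embedding (A : set S) : interior (j @` A) = j @` interior A.
Proof.
apply/seteqP; split => [y iAy|_ [x iAx <-]]; last exact: nbhs_embedding.
have [x Ax exy] := nbhs_singleton iAy; rewrite -exy in iAy *.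
have nA : nbhs x (j @^-1` (j @` A)) := j_cont iAy.
by exists x => //; apply: filterS nA => z [a Aa /j_inj <-].
Qed.

Lemma boundary_embedding (A : set S) : boundary (j @` A) = j @` boundary A.
Proof.
by rewrite /boundary closure_embedding interior_embedding inj_image_setD.
Qed.

Lemma borel_embedding (A : set S) : borel A -> borel (j @` A).
Proof.
case: jE => _ _ j_open _.
suff : <<s open >> `<=` [set A | borel (j @` A)] by apply.
apply: smallest_sub => [|U oU]; last by apply: borel_open; exact: j_open.
split => [|B bB|F bF] /=.
- by rewrite image_set0; exact: borel_open open0.
- rewrite inj_image_setD //; apply: borelD => //.
  by apply: borel_open; exact: j_open openT.
- by rewrite image_bigcup; exact: borel_bigcup.
Qed.

Lemma compact_embedding (K : set S) : compact K -> compact (j @` K).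
Proof. by move=> cK; apply: continuous_compact => //; exact: continuous_subspaceT. Qed.

Lemma compact_preimage_embedding (K : set T) :
  compact K -> K `<=` range j -> compact (j @^-1` K).
Proof.
move=> cK Kj F PF FK.
have [y [Ky clFy]] := cK (j @ F) (fmap_proper_filter j PF) FK.
have [x _ exy] := Kj _ Ky; subst y.
exists x; split => // C B FC /nbhs_embedding nB.
have [_ [[c Cc <-] [b Bb /j_inj ebc]]] : j @` C `&` j @` B !=set0.
  exact: clFy _ _ (filterS (@preimage_image _ _ j C) FC) nB.
by exists c; split => //; rewrite -ebc.
Qed.

Lemma precompact_embedding (W : set S) : precompact_set W -> precompact_set (j @` W).
Proof. by rewrite /precompact_set closure_embedding; exact: compact_embedding. Qed.

Lemma nonempty_interior_embedding (W : set S) :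
  nonempty_interior W -> nonempty_interior (j @` W).
Proof. by rewrite /nonempty_interior interior_embedding => -[x iWx]; exists (j x), x. Qed.

Lemma topologically_regular_embedding (W : set S) :
  topologically_regular W -> topologically_regular (j @` W).
Proof.
by rewrite /topologically_regular closure_embedding interior_embedding closure_embedding => ->.
Qed.

End ClopenEmbedding.

Lemma clopen_embedding_translation (M : topologicalZmodType) (b : M) :
  clopen_embedding (fun y : M => b + y).
Proof.
have translateE (U : set M) : [set b + y | y in U] = (fun z => - b + z) @^-1` U.
  apply/seteqP; split => [_ [y Uy <-]|z Uz]; first by rewrite /= addKr.
  by exists (- b + z); rewrite ?addNKr.
split; [exact: addrI | exact: addl_continuous | |].
  by move=> U oU; rewrite translateE; apply: open_comp => // z _; exact: addl_continuous.
rewrite (_ : range _ = setT); first exact: closedT.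
by apply/seteqP; split => // z _; exists (- b + z); rewrite ?addNKr.
Qed.

(** * Haar measures *)

Section Haar.
Variables (T : topologicalZmodType) (mu : set T -> \bar RR).
Hypothesis hmu : is_haar_measure mu.

Lemma haar_ge0 (A : set T) : borel A -> (0 <= mu A)%E.
Proof. by have [_ [ge0 _]] := hmu; exact: ge0. Qed.

Lemma haar_le (A B : set T) : borel A -> borel B -> A `<=` B -> (mu A <= mu B)%E.
Proof.
move=> bA bB AB; have [_ [_ [_ [_ [_ [outer _]]]]]] := hmu.
rewrite (outer _ bA) (outer _ bB); apply: ereal_inf_le_tmp.
by move=> _ [U [oU BU] <-]; exists U => //; split => //; exact: subset_trans BU.
Qed.

Lemma haar_translate (x : T) (A : set T) : borel A -> mu [set x + a | a in A] = mu A.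
Proof. by have [_ [_ [_ [translate _]]]] := hmu; exact: translate. Qed.

Lemma haar_partition_neq0 (F : (set T)^nat) : (forall n, borel (F n)) ->
  trivIset setT F -> \bigcup_n F n = setT -> exists n, mu (F n) != 0%E.
Proof.
move=> bF tF UF; apply: contrapT => /forallNP F0.
have {}F0 n : mu (F n) = 0%E by apply/eqP/negPn/negP; exact: F0.
have [_ [_ [additive [_ [_ [_ [_ [A [bA muA]]]]]]]]] := hmu.
have muT : mu setT = 0%E.
  have := additive F bF tF; rewrite UF.
  under eq_fun do rewrite big1 //.
  by move/cvg_lim => <- //; rewrite lim_cst.
move/negP: muA; apply; rewrite eq_le haar_ge0 // andbT -muT.
by apply: haar_le => //; exact: borel_open openT.
Qed.

End Haar.

Lemma measure_regular_translation (M : topologicalZmodType) (b : M) (X : set M) :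
  measure_regular X -> measure_regular [set b + y | y in X].
Proof.
move=> mX mu hmu.
rewrite (boundary_embedding (clopen_embedding_translation b)) haar_translate //.
  exact: mX.
exact: borel_boundary.
Qed.

Lemma clopen_subgroup_embedding (H H' : topologicalZmodType) (j : H -> H') :
  open_closed_subgroup_embedding j -> clopen_embedding j.
Proof. by case=> j_inj _ j_cont j_open [_ closed_j]. Qed.

Section HaarRestriction.
Variables (H H' : topologicalZmodType) (j : H -> H') (idx : H' -> nat).
Hypothesis jE : open_closed_subgroup_embedding j.
Hypothesis idx_coset : forall y z, idx y = idx z <-> range j (y - z).

Let jC : clopen_embedding j := clopen_subgroup_embedding jE.

Lemma image_translate_embedding (x : H) (A : set H) :
  j @` [set x + a | a in A] = [set j x + y | y in j @` A].
Proof.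
have [_ jD _ _ _] := jE.
apply/seteqP; split => [_ [_ [a Aa <-] <-]|_ [_ [a Aa <-] <-]].
  by exists (j a); [exists a | rewrite jD].
by exists (x + a); [exists a | rewrite jD].
Qed.

Lemma idx_fiber (x : H') : [set y | idx y = idx x] = [set x + y | y in range j].
Proof.
apply/seteqP; split => [y /idx_coset [h _ ejh]|_ [_ [h _ <-] <-]].
  by exists (j h); [exists h | rewrite ejh addrC subrK].
by apply/idx_coset; exists h => //; rewrite addrC addKr.
Qed.

Section Measure.
Variable mu : set H' -> \bar RR.
Hypothesis hmu : is_haar_measure mu.

Lemma haar_range_embedding_neq0 : mu (range j) != 0%E.
Proof.
(* The fibres of idx are the cosets of range j; if these were null, so would be H'. *)
have [mu0 _] := hmu; have [_ _ _ _ [open_j _]] := jE.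
have coset_open (x : H') : open [set x + y | y in range j].
  by case: (clopen_embedding_translation x) => _ _ + _; apply.
pose F n := [set y | idx y = n].
have F_cases n : F n = set0 \/ exists x, F n = [set x + y | y in range j].
  have [[x Fx]|nF] := pselect (exists x, F n x); [right; exists x | left].
    by rewrite -idx_fiber /F Fx.
  by apply/seteqP; split => y // Fy; apply: nF; exists y.
have bF n : borel (F n).
  by case: (F_cases n) => [->|[x ->]]; apply: borel_open => //; exact: open0.
apply/negP => /eqP mu_range0.
have tF : trivIset setT F by move=> m n _ _ [y [<- <-]].
have UF : \bigcup_n F n = setT by apply/seteqP; split => // y _; exists (idx y).
have [n] := haar_partition_neq0 hmu bF tF UF.
case: (F_cases n) => [->|[x ->]]; first by rewrite mu0 eqxx.
by rewrite haar_translate ?mu_range0 ?eqxx //; exact: borel_open.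
Qed.

Lemma haar_restrict_outer (A : set H) : borel A ->
  mu (j @` A) = ereal_inf [set mu (j @` U) | U in [set U | open U /\ A `<=` U]].
Proof.
have [_ [_ [_ [_ [_ [outer _]]]]]] := hmu; have [_ j_cont j_open _] := jC.
move=> bA; rewrite (outer _ (borel_embedding jC bA)); apply/le_anti/andP; split.
  apply: ereal_inf_le_tmp => _ [U [oU AU] <-]; exists (j @` U) => //.
  by split; [exact: j_open | exact: image_subset].
apply: le_ereal_inf_tmp => _ [V [oV AV] <-]; apply: ge_ereal_inf.
have oV' : open (j @^-1` V) by apply: open_comp => // x _; exact: j_cont.
exists (mu (j @` (j @^-1` V))).
  by exists (j @^-1` V) => //; split => // a Aa; apply: AV; exists a.
apply: (haar_le hmu); [|exact: borel_open|exact: image_preimage_subset].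
by apply: borel_open; exact: j_open.
Qed.

Lemma haar_restrict_inner (U : set H) : open U ->
  mu (j @` U) = ereal_sup [set mu (j @` K) | K in [set K | compact K /\ K `<=` U]].
Proof.
have [_ [_ [_ [_ [_ [_ [inner _]]]]]]] := hmu; have [j_inj _ j_open _] := jC.
move=> oU; rewrite (inner _ (j_open _ oU)); congr ereal_sup.
apply/seteqP; split => _ [K [cK KU] <-].
  have Kj : K `<=` range j by move=> y /KU [x _ <-]; exists x.
  exists (j @^-1` K); first split.
  - exact: compact_preimage_embedding.
  - by move=> x /KU [x' Ux' /j_inj <-].
  congr mu; apply/seteqP; split; first exact: image_preimage_subset.
  by move=> y Ky; have [x _ exy] := Kj _ Ky; exists x; rewrite /preimage /= exy.
exists (j @` K) => //; split; first exact: compact_embedding.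
exact: image_subset.
Qed.

Lemma haar_restrict : is_haar_measure (fun A => mu (j @` A)).
Proof.
have [mu0 [ge0 [additive [_ [finite [_ [_ _]]]]]]] := hmu.
have [j_inj _ _ _] := jC.
do 7?split.
- by rewrite image_set0.
- by move=> A bA; apply: ge0; exact: borel_embedding.
- move=> F bF tF; rewrite image_bigcup; apply: additive => [n|].
    exact: borel_embedding.
  move=> m n _ _ [_ [[a Fma <-] [b Fnb /j_inj eba]]].
  by apply: tF => //; exists a; split => //; rewrite -eba.
- move=> x A bA; rewrite image_translate_embedding haar_translate //.
  exact: borel_embedding.
- by move=> K cK; apply: finite; exact: compact_embedding.
- exact: haar_restrict_outer.
- exact: haar_restrict_inner.
- exists setT; split; [exact: borel_open openT | exact: haar_range_embedding_neq0].
Qed.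

End Measure.

Lemma measure_regular_embedding (W : set H) :
  measure_regular W -> measure_regular (j @` W).
Proof. by move=> mW mu hmu; rewrite (boundary_embedding jC); exact: (mW _ (haar_restrict hmu)). Qed.

End HaarRestriction.

(** * The group (H x Z) / <(c, -N)> *)

(* Elements are the pairs (h, i) with i reduced mod N; ext_cls reduces an
   arbitrary pair, moving the carry i %/ N into the first component as a
   multiple of c.  The parameter c does not occur in the carrier, it only
   selects the group law.  Since i %/ 0 = 0 and i %% 0 = i, N = 0 gives H x Z. *)
Definition extZ (H : zmodType) (N : int) (c : H) : Type :=
  {p : H * int | (p.2 %% N)%Z == p.2}.
Arguments extZ : clear implicits.

Section ExtZ.
Variables (H : zmodType) (N : int) (c : H).
Local Notation H' := (extZ H N c).

Definition ext1 (x : H') : H := (val x).1.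
Definition ext2 (x : H') : int := (val x).2.

Lemma ext_of_subproof (h : H) (i : int) : ((h, (i %% N)%Z).2 %% N)%Z == (i %% N)%Z.
Proof. by rewrite /= modz_mod. Qed.

Definition ext_of (h : H) (i : int) : H' :=
  exist _ (h, (i %% N)%Z) (ext_of_subproof h i).

Definition ext_cls (p : H * int) : H' := ext_of (p.1 + c *~ (p.2 %/ N)%Z) p.2.

Lemma ext_eq (x y : H') : ext1 x = ext1 y -> ext2 x = ext2 y -> x = y.
Proof.
move=> e1 e2; apply: val_inj.
by rewrite [val x]surjective_pairing [val y]surjective_pairing; congr pair.
Qed.

Lemma ext1_of h i : ext1 (ext_of h i) = h. Proof. by []. Qed.

Lemma ext2_of h i : ext2 (ext_of h i) = (i %% N)%Z. Proof. by []. Qed.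

Lemma modz_ext2 (x : H') : (ext2 x %% N)%Z = ext2 x.
Proof. exact/eqP/(valP x). Qed.

Lemma divz_ext2 (x : H') : (ext2 x %/ N)%Z = 0.
Proof.
have [->|N0] := eqVneq N 0; first by rewrite divz0.
have /eqP := modz_ext2 x; rewrite /modz subr_eq addrC -subr_eq subrr eq_sym.
by rewrite mulf_eq0 (negPf N0) orbF => /eqP.
Qed.

Lemma ext_of_modz h i : ext_of h (i %% N)%Z = ext_of h i.
Proof. by apply: ext_eq; rewrite // !ext2_of modz_mod. Qed.

Lemma ext_ofK (x : H') : ext_of (ext1 x) (ext2 x) = x.
Proof. by apply: ext_eq; rewrite // ext2_of modz_ext2. Qed.

Lemma ext_clsK (x : H') : ext_cls (ext1 x, ext2 x) = x.
Proof. by rewrite /ext_cls /= divz_ext2 mulr0z addr0 ext_ofK. Qed.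

Lemma ext_clsP (P : H' -> Prop) : (forall p, P (ext_cls p)) -> forall x, P x.
Proof. by move=> Pcls x; rewrite -(ext_clsK x). Qed.

Lemma ext_cls_carry h i k : N != 0 -> ext_cls (h + c *~ k, i - k * N) = ext_cls (h, i).
Proof.
move=> N0; rewrite /ext_cls /= -mulNr [i + _]addrC divzMDl // -ext_of_modz modzMDl ext_of_modz.
by rewrite mulrzDr mulrNz addrA addrK.
Qed.

Definition ext_add (x y : H') := ext_cls (ext1 x + ext1 y, ext2 x + ext2 y).
Definition ext_opp (x : H') := ext_cls (- ext1 x, - ext2 x).

Lemma ext_add_cls p q : ext_add (ext_cls p) (ext_cls q) = ext_cls (p.1 + q.1, p.2 + q.2).
Proof.
have [N0|N0] := eqVneq N 0.
  have d0 m : (m %/ N)%Z = 0 by rewrite N0 divz0.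
  have m0 m : (m %% N)%Z = m by rewrite N0 modz0.
  by rewrite /ext_add /ext_cls !ext1_of !ext2_of /= !d0 !m0 !mulr0z !addr0.
rewrite /ext_add [RHS](esym (ext_cls_carry _ _ ((p.2 %/ N)%Z + (q.2 %/ N)%Z) N0)).
congr (ext_cls (_, _)); rewrite /ext_cls ?ext1_of ?ext2_of /=.
  by rewrite mulrzDr addrACA.
by rewrite /modz; ring.
Qed.

Lemma ext_addA : associative ext_add.
Proof.
by elim/ext_clsP=> p; elim/ext_clsP=> q; elim/ext_clsP=> r; rewrite !ext_add_cls !addrA.
Qed.

Lemma ext_addC : commutative ext_add.
Proof. by elim/ext_clsP=> p; elim/ext_clsP=> q; rewrite !ext_add_cls addrC [p.2 + _]addrC. Qed.

Lemma ext_add0 : left_id (ext_of 0 0) ext_add.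
Proof.
elim/ext_clsP=> p; rewrite -[ext_of 0 0]ext_clsK ext_add_cls /= ext2_of mod0z !add0r.
by rewrite -surjective_pairing.
Qed.

Lemma ext_cls0 : ext_cls (0, 0) = ext_of 0 0.
Proof. by rewrite /ext_cls /= div0z mulr0z addr0. Qed.

Lemma ext_addN : left_inverse (ext_of 0 0) ext_opp ext_add.
Proof. by move=> x; rewrite -{2}[x]ext_clsK ext_add_cls /= !addNr ext_cls0. Qed.

HB.instance Definition _ := Choice.copy H' {p : H * int | (p.2 %% N)%Z == p.2}.
HB.instance Definition _ := GRing.isZmodule.Build H' ext_addA ext_addC ext_add0 ext_addN.

Lemma ext_clsD p q : ext_cls p + ext_cls q = ext_cls (p.1 + q.1, p.2 + q.2).
Proof. exact: ext_add_cls. Qed.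

Lemma ext2_0 : ext2 (0 : H') = 0. Proof. exact: mod0z. Qed.

Lemma ext_subE (x y : H') : x - y = ext_cls (ext1 x - ext1 y, ext2 x - ext2 y).
Proof. by rewrite -{1}[x]ext_clsK ext_clsD. Qed.

End ExtZ.
Arguments ext1 {H N c}.
Arguments ext2 {H N c}.

Section ExtTopology.
Variables (H : topologicalZmodType) (N : int) (c : H).
Local Notation H' := (extZ H N c).
Local Notation ext_of := (@ext_of H N c).

Definition ext_slice (U : set H') (i : int) : set H := [set h | U (ext_of h i)].
Definition ext_open (U : set H') := forall i, open (ext_slice U i).

Lemma ext_openT : ext_open setT.
Proof. by move=> i; exact: openT. Qed.

Lemma ext_openI : setI_closed ext_open.
Proof. by move=> A B oA oB i; exact: (openI (oA i) (oB i)). Qed.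

Lemma ext_open_bigcup (I : Type) (f : I -> set H') :
  (forall i, ext_open (f i)) -> ext_open (\bigcup_i f i).
Proof. by move=> fo i; apply: bigcup_open => k _; exact: fo. Qed.

HB.instance Definition _ := isOpenTopological.Build H' ext_openT ext_openI ext_open_bigcup.

Lemma open_extE (U : set H') : open U = ext_open U.
Proof. by []. Qed.

Lemma ext2_of_ext2 h (x : H') : ext2 (ext_of h (ext2 x)) = ext2 x.
Proof. by rewrite ext2_of modz_ext2. Qed.

Lemma open_ext_fiber (i : int) (S : set H) : open S ->
  open [set y : H' | ext2 y = (i %% N)%Z /\ S (ext1 y)].
Proof.
move=> oS; rewrite open_extE => k.
have [e|ne] := eqVneq (k %% N)%Z (i %% N)%Z.
  rewrite (_ : ext_slice _ k = S) //.
  by apply/seteqP; split=> h; rewrite /ext_slice /= ext2_of ext1_of e //; case.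
rewrite (_ : ext_slice _ k = set0); first exact: open0.
by apply/seteqP; split=> h //; rewrite /ext_slice /= ext2_of => -[/eqP]; rewrite (negPf ne).
Qed.

Lemma nbhs_extE (x : H') (A : set H') : nbhs x A <-> nbhs (ext1 x) (ext_slice A (ext2 x)).
Proof.
split => [[B [oB Bx BA]]|/nbhs_interior Ax].
  rewrite nbhsE; exists (ext_slice B (ext2 x)); last by move=> h; exact: BA.
  by split; [exact: oB | rewrite /ext_slice /= ext_ofK].
exists [set y : H' | ext2 y = (ext2 x %% N)%Z /\ (ext_slice A (ext2 x))° (ext1 y)].
split; first exact: open_ext_fiber (@open_interior _ _).
  by split; [rewrite modz_ext2 | exact: nbhs_singleton Ax].
move=> y [e /interior_subset]; rewrite modz_ext2 in e.
by rewrite /ext_slice -e /= ext_ofK.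
Qed.

Lemma nbhs_ext_fiber (x : H') (A : set H) : nbhs (ext1 x) A ->
  nbhs x [set y : H' | ext2 y = ext2 x /\ A (ext1 y)].
Proof.
move=> nA; apply/nbhs_extE; apply: filterS nA => h Ah.
by rewrite /ext_slice /= ext2_of_ext2.
Qed.

Lemma ext_sub_continuous : continuous (fun p : H' * H' => p.1 - p.2).
Proof.
move=> [x y] A /nbhs_extE /=.
set i := ext2 x - ext2 y; set k := c *~ (i %/ N)%Z.
have subE x' y' : ext2 x' = ext2 x -> ext2 y' = ext2 y ->
    x' - y' = ext_of (ext1 x' - ext1 y' + k) i.
  by move=> ex ey; rewrite ext_subE /ext_cls /= ex ey.
rewrite (subE x y) // ext1_of ext2_of => nA.
have nA' : nbhs (ext1 x - ext1 y + k) [set h | A (ext_of h i)].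
  by apply: filterS nA => h; rewrite /ext_slice /= ext_of_modz.
have [[P Q] [/= nP nQ] PQA] := continuous_comp (@sub_continuous H (ext1 x, ext1 y))
  (@addr_continuous H k (ext1 x - ext1 y)) nA'.
exists ([set x' | ext2 x' = ext2 x /\ P (ext1 x')],
        [set y' | ext2 y' = ext2 y /\ Q (ext1 y')]).
  by split; exact: nbhs_ext_fiber.
by move=> [x' y'] [[/= ex Px] [ey Qy]]; rewrite /= (subE x' y') //; exact: (PQA (_, _)).
Qed.

HB.instance Definition _ :=
  PreTopologicalNmodule_isTopologicalZmodule.Build H' ext_sub_continuous.

End ExtTopology.

Section ExtEmbedding.
Variables (H : topologicalZmodType) (N : int) (c : H).
Local Notation H' := (extZ H N c).
Local Notation ext_of := (@ext_of H N c).

Definition inext (h : H) : H' := ext_of h 0.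

Lemma ext1_inext h : ext1 (inext h) = h. Proof. by []. Qed.

Lemma ext2_inext h : ext2 (inext h) = 0. Proof. by rewrite ext2_of mod0z. Qed.

Lemma inext_inj : injective inext. Proof. exact: can_inj ext1_inext. Qed.

Lemma ext_cls_inext h : ext_cls N c (h, 0) = inext h.
Proof. by rewrite /ext_cls /= div0z mulr0z addr0. Qed.

Lemma inextD x y : inext (x + y) = inext x + inext y.
Proof. by rewrite -!ext_cls_inext ext_clsD /= addr0. Qed.

Lemma addr_inext (x : H') h : x + inext h = ext_of (ext1 x + h) (ext2 x).
Proof.
by rewrite -{1}(ext_clsK x) -ext_cls_inext ext_clsD /= addr0 /ext_cls /= divz_ext2 mulr0z addr0.
Qed.

Lemma image_inext (A : set H) : inext @` A = [set y | ext2 y = 0 /\ A (ext1 y)].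
Proof.
apply/seteqP; split => [_ [a Aa <-]|y [e Ay]]; first by split; [exact: ext2_inext|].
by exists (ext1 y) => //; apply: ext_eq; rewrite ?ext2_inext.
Qed.

Lemma ext_of_continuous i : continuous (ext_of ^~ i).
Proof.
move=> h A /nbhs_extE; rewrite ext1_of ext2_of.
by apply: filterS => h'; rewrite /ext_slice /= ext_of_modz.
Qed.

Lemma open_image_inext (U : set H) : open U -> open (inext @` U).
Proof. by move=> oU; rewrite image_inext; have := open_ext_fiber N c 0 oU; rewrite mod0z. Qed.

Lemma closed_range_inext : closed (range inext).
Proof.
rewrite -openC open_extE => k; rewrite /ext_slice /=.
have [k0|k0] := eqVneq (k %% N)%Z 0.
  rewrite (_ : [set _ | _] = set0); first exact: open0.
  apply/seteqP; split=> h //= /(_ _); apply; exists h => //.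
  by apply: ext_eq; rewrite ?ext2_inext ?ext2_of.
rewrite (_ : [set _ | _] = setT); first exact: openT.
apply/seteqP; split=> h //= _ [h' _ /(congr1 ext2)].
by rewrite ext2_inext ext2_of => /esym/eqP; rewrite (negPf k0).
Qed.

Lemma inext_subgroup_embedding : open_closed_subgroup_embedding inext.
Proof.
split; [exact: inext_inj | exact: inextD | exact: ext_of_continuous | exact: open_image_inext|].
by split; [exact: open_image_inext openT | exact: closed_range_inext].
Qed.

Lemma ext2_coset (y z : H') : pickle (ext2 y) = pickle (ext2 z) <-> range inext (y - z).
Proof.
split => [/(pcan_inj pickleK) eyz|[h _ ehyz]].
  exists (ext1 y - ext1 z) => //.
  by rewrite ext_subE eyz subrr -ext_cls_inext.
by rewrite -[y](subrK z) -ehyz addrC addr_inext ext2_of modz_ext2.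
Qed.

Lemma ext_hausdorff : hausdorff_space H -> hausdorff_space H'.
Proof.
move=> hH x y clxy.
have [z [[ezx _] [ezy _]]] :=
  clxy _ _ (nbhs_ext_fiber (@filterT _ (nbhs (ext1 x)) _))
           (nbhs_ext_fiber (@filterT _ (nbhs (ext1 y)) _)).
apply: ext_eq; last by rewrite -ezx ezy.
apply: hH => A B nA nB.
have [w [[_ Aw] [_ Bw]]] := clxy _ _ (nbhs_ext_fiber nA) (nbhs_ext_fiber nB).
by exists (ext1 w).
Qed.

Lemma ext_locally_compact : locally_compact_space H -> locally_compact_space H'.
Proof.
move=> lcH x; have [K [nK cK]] := lcH (ext1 x).
exists ((ext_of ^~ (ext2 x)) @` K); split.
  by apply/nbhs_extE; apply: filterS nK => h Kh; exists h.
by apply: continuous_compact => //; apply: continuous_subspaceT; exact: ext_of_continuous.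
Qed.

End ExtEmbedding.

Lemma neq_triangle (T : eqType) (x y z : T) :
  ((x != z)%:R : RR) <= (x != y)%:R + (y != z)%:R.
Proof.
have [->|_] := eqVneq x y; first by case: (y != z) => /=; lra.
by case: (x != z); case: (y != z) => /=; lra.
Qed.

Lemma ext_metrisable (H : topologicalZmodType) (N : int) (c : H) :
  metrisable H -> metrisable (extZ H N c).
Proof.
move=> [d [d_ge0 d_eq0 dC d_tri d_open]].
exists (fun x y => d (ext1 x) (ext1 y) + (ext2 x != ext2 y)%:R); split.
- by move=> x y; apply: addr_ge0.
- move=> x y; split => [/eqP|->]; last by rewrite (proj2 (d_eq0 _ _) erefl) eqxx addr0.
  rewrite paddr_eq0 // => /andP[/eqP/d_eq0 e1]; rewrite pnatr_eq0 eqb0 negbK => /eqP.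
  exact: ext_eq.
- by move=> x y; rewrite dC eq_sym.
- by move=> x y z; rewrite addrACA; apply: lerD => //; exact: neq_triangle.
move=> A; split => [oA x Ax|Aball].
  have Ax' : ext_slice A (ext2 x) (ext1 x) by rewrite /ext_slice /= ext_ofK.
  have [e e_gt0 ballA] := (d_open _).1 (oA (ext2 x)) _ Ax'.
  exists (Num.min e 1); first by rewrite lt_min e_gt0 ltr01.
  move=> y /=; case: eqP => [exy|_]; last first.
    by rewrite lt_min => /andP[_]; rewrite -subr_lt0 addrK ltNge d_ge0.
  rewrite addr0 lt_min => /andP[/ballA + _]; rewrite /ext_slice /= exy.
  by rewrite ext_ofK.
rewrite open_extE => k; apply/(d_open _).2 => h Ah.
have [e e_gt0 ballA] := Aball _ Ah; exists e => // h' dhh'.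
by apply: ballA; rewrite /= !ext1_of !ext2_of eqxx addr0.
Qed.

(** * The lattice L' *)

Section ExtLattice.
Variables (G H : topologicalZmodType) (L : set (G * H)) (a : G) (N : int) (c : H).
Hypothesis hL : cut_and_project L.
Hypothesis LNc : L (a *~ N, c).
Hypothesis dvdN : forall k h, L (a *~ k, h) -> (N %| k)%Z.
Local Notation H' := (extZ H N c).
Local Notation ext_of := (@ext_of H N c).
Local Notation ext_cls := (@ext_cls H N c).
Local Notation inext := (@inext H N c).

Definition ext_lattice : set (G * H') := [set p | L (p.1 - a *~ ext2 p.2, ext1 p.2)].

Let sL : is_subgroup L. Proof. by case: hL => _ _ []. Qed.

Lemma ext_lattice_cls g h i : ext_lattice (g, ext_cls (h, i)) <-> L (g - a *~ i, h).
Proof.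
rewrite /ext_lattice /= ext1_of ext2_of; set q := (i %/ N)%Z.
have Lq : L (a *~ N *~ q, c *~ q) by exact: pair_subgroupMz.
have -> : (g - a *~ (i %% N)%Z, h + c *~ q) = (g - a *~ i, h) + (a *~ N *~ q, c *~ q).
  by congr pair; rewrite /modz mulrzBr opprB addrA addrAC -mulrzA mulrC.
split => [/(subgroupB sL)/(_ Lq)|Lgh]; first by rewrite addrK.
exact: subgroupD.
Qed.

Lemma ext_lattice_inext g h : ext_lattice (g, inext h) <-> L (g, h).
Proof. by rewrite /ext_lattice /= ext2_inext mulr0z subr0. Qed.

Lemma ext_lattice_subgroup : is_pair_subgroup ext_lattice.
Proof.
split => [|[g x] [g' y] Lx Ly].
  by rewrite /ext_lattice /= ext2_0 mulr0z subr0; exact: (subgroup0 sL).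
rewrite /pair_sub /= ext_subE; apply/ext_lattice_cls.
by rewrite mulrzBr opprD addrACA -opprD; exact: (subgroupB sL Lx Ly).
Qed.

Lemma ext_lattice_inj : {in ext_lattice &, injective (fun p : G * H' => p.1)}.
Proof.
move=> [g x] [g' y]; rewrite !inE /= => Lx Ly egg'; subst g'.
have Ld : L (a *~ (ext2 x - ext2 y), ext1 y - ext1 x).
  have Lyx : L ((g - a *~ ext2 y) - (g - a *~ ext2 x), ext1 y - ext1 x).
    exact: (subgroupB sL Ly Lx).
  by rewrite mulrzBr; move: Lyx; rewrite opprB addrC addrA subrK.
have e2 : ext2 x = ext2 y.
  by move/dvdN: Ld; rewrite -eqz_mod_dvd !modz_ext2 => /eqP.
have [_ _ _ fst_inj _] := hL.
move: Ld; rewrite e2 subrr mulr0z => L0d.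
have /(congr1 snd)/eqP := fst_inj _ _ (mem_set L0d) (mem_set (subgroup0 sL)) erefl.
by rewrite /= subr_eq0 => /eqP e1; congr pair; apply: ext_eq.
Qed.

Lemma ext_lattice_dense : dense [set p.2 | p in ext_lattice].
Proof.
move=> O [x Ox] oO; have [_ _ _ _ denseL] := hL.
have Ox' : ext_slice O (ext2 x) (ext1 x) by rewrite /ext_slice /= ext_ofK.
have [h [Oh [[g h'] Lgh /= eh']]] := denseL _ (ex_intro _ _ Ox') (oO (ext2 x)).
subst h'; exists (ext_of h (ext2 x)); split => //.
exists (g + a *~ ext2 x, ext_of h (ext2 x)) => //.
by rewrite /ext_lattice /= ext2_of_ext2 ext1_of addrK.
Qed.

Lemma ext_lattice_discrete : discrete_subset ext_lattice.
Proof.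
move=> [g x] Lx; have [_ _ [_ discreteL _] _ _] := hL.
have [U [[[P Q] [/= nP nQ] PQU] UL]] := discreteL _ Lx.
exists [set q : G * H' | ext2 q.2 = ext2 x /\ U (q.1 - a *~ ext2 x, ext1 q.2)]; split.
  exists ([set g' | P (g' - a *~ ext2 x)], [set y | ext2 y = ext2 x /\ Q (ext1 y)]).
    by split; [exact: (@addr_continuous G (- (a *~ ext2 x)) g _ nP) | exact: nbhs_ext_fiber].
  by move=> [g' y] /= [Pg' [ey Qy]]; split => //; apply: PQU; split.
apply/seteqP; split => [[g' y] [[/= ey Uy] Ly]|_ ->].
  have : (U `&` L) (g' - a *~ ext2 x, ext1 y) by split => //; rewrite -ey.
  rewrite UL => -[/addIr e1 e2].
  by rewrite /= e1; congr pair; apply: ext_eq.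
split => //=; split => //.
have : [set (g - a *~ ext2 x, ext1 x)] (g - a *~ ext2 x, ext1 x) by [].
by rewrite -UL => -[].
Qed.

Lemma ext_lattice_cocompact : cocompact_pair ext_lattice.
Proof.
have [_ _ [_ _ [K [cK cover]]] _ _] := hL.
pose phi (k : G * H) : G * H' := (k.1, inext k.2).
exists (phi @` K); split.
  apply: continuous_compact => //; apply: continuous_subspaceT => k A.
  move=> [[P Q] [/= nP nQ] PQA]; exists (P, inext @^-1` Q) => [|[g h] [Pg Qh]].
    by split => //; exact: ext_of_continuous nQ.
  exact: PQA.
move=> [g x]; have [k [l [Kk [Ll []]]]] := cover (g - a *~ ext2 x, ext1 x).
move=> ekl1 ekl2.
exists (phi k), (l.1 + a *~ ext2 x, ext_of l.2 (ext2 x)); split; first by exists k.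
split; first by rewrite /ext_lattice /= ext2_of_ext2 ext1_of addrK -surjective_pairing.
rewrite /pair_add /=; congr pair; first by rewrite addrA -ekl1 subrK.
by rewrite addrC addr_inext ext1_of ext2_of_ext2 addrC -ekl2 ext_ofK.
Qed.

Lemma cut_and_project_ext_lattice : cut_and_project ext_lattice.
Proof.
have [[hG lcG] [hH lcH] _ _ _] := hL.
split => //; last exact: ext_lattice_dense; last exact: ext_lattice_inj.
  by split; [exact: ext_hausdorff | exact: ext_locally_compact].
split; [exact: ext_lattice_subgroup | exact: ext_lattice_discrete | exact: ext_lattice_cocompact].
Qed.

Lemma ext_lattice_translate g h : ext_lattice (a + g, ext_cls (0, 1) + inext h) <-> L (g, h).
Proof. by rewrite -ext_cls_inext ext_clsD /= add0r addr0 ext_lattice_cls mulr1z addrC addKr. Qed.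

Lemma ext_lattice_lift : ext_lattice (a, ext_cls (0, 1)).
Proof. by apply/ext_lattice_cls; rewrite mulr1z subrr; exact: (subgroup0 sL). Qed.

Lemma proj_set_inext (W : set H) : proj_set L W = proj_set ext_lattice (inext @` W).
Proof.
apply/seteqP; split => [_ [[g h] [Lgh Wh] <-]|_ [[g x] [Lgx [h Wh ehx]] <-]].
  by exists (g, inext h) => //; split; [exact/ext_lattice_inext | exists h].
rewrite /= in ehx; subst x.
by exists (g, h) => //; split => //; exact/ext_lattice_inext.
Qed.

Lemma proj_set_translate (W : set H) : [set a + g | g in proj_set L W] =
  proj_set ext_lattice [set ext_cls (0, 1) + y | y in inext @` W].
Proof.
apply/seteqP; split => [_ [_ [[g h] [Lgh Wh] <-] <-]|_ [[g x] [Lgx [_ [h Wh <-] ehx]] <-]].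
  exists (a + g, ext_cls (0, 1) + inext h) => //.
  by split; [exact/ext_lattice_translate | exists (inext h) => //; exists h].
rewrite /= in ehx; subst x.
exists (g - a); last by rewrite addrC subrK.
exists (g - a, h) => //; split => //; apply/ext_lattice_translate.
by rewrite addrC subrK.
Qed.

End ExtLattice.

Theorem theorem2p2 (G H : topologicalZmodType) (L : set (G * H)) (a : G) :
  cut_and_project L ->
  exists (H' : topologicalZmodType) (L' : set (G * H')) (j : H -> H') (b : H'),
    (cut_and_project L' /\
        (* (a) *) open_closed_subgroup_embedding j /\
        (* (b) *) L' (a, b) /\
        (* (c) *) (forall (g : G) (h : H), L' (g, j h) <-> L (g, h)) /\
        (* (d) *) (forall W : set H,
             proj_set L W = proj_set L' (j @` W) /\
             [set a + x | x in proj_set L W] =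
               proj_set L' [set b + y | y in j @` W]) /\
        (* (e) *) (forall W : set H,
             (precompact_set W ->
                precompact_set (j @` W) /\ precompact_set [set b + y | y in j @` W]) /\
             (nonempty_interior W ->
                nonempty_interior (j @` W) /\ nonempty_interior [set b + y | y in j @` W]) /\
             (topologically_regular W ->
                topologically_regular (j @` W) /\
                topologically_regular [set b + y | y in j @` W]) /\
             (measure_regular W ->
                measure_regular (j @` W) /\ measure_regular [set b + y | y in j @` W])) /\
        (* (f) *) (metrisable H -> metrisable H')).
Proof.
move=> hL; have [_ _ [sL _ _] _ _] := hL.
have [N [c [LNc dvdN]]] := pair_subgroup_multiples a sL.
pose b := ext_cls N c (0, 1).
have jE := @inext_subgroup_embedding H N c.
have jC := clopen_subgroup_embedding jE.
have bC := clopen_embedding_translation b.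
have jM := measure_regular_embedding jE (@ext2_coset H N c).
exists (extZ H N c), (@ext_lattice G H L a N c), (inext N c), b.
split; first exact: cut_and_project_ext_lattice.
split; first exact: jE.
split; first exact: ext_lattice_lift.
split; first exact: ext_lattice_inext.
split; first by move=> W; split; [exact: proj_set_inext | exact: proj_set_translate].
split; last exact: ext_metrisable.
move=> W; split; [|split; [|split]] => hW; split.
- exact: precompact_embedding.
- exact/(precompact_embedding bC)/precompact_embedding.
- exact: nonempty_interior_embedding.
- exact/(nonempty_interior_embedding bC)/nonempty_interior_embedding.
- exact: topologically_regular_embedding.
- exact/(topologically_regular_embedding bC)/topologically_regular_embedding.
- exact: jM.
- exact/measure_regular_translation/jM.
Qed.
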